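(* Let $G$ and $H$ be finite simple connected graphs and let $L$ be a non-empty proper subset of $V(G)$. Let $T$ be a non-empty cutset of $G\circ_L H$, and write $T=T_0\cup\bigcup_{v\in L}T_v$ with $T_0\subseteq V(G)$ and $T_v\subseteq V(H_v)$ for all $v\in L$. Then: (1) $\emptyset\neq T_0\subsetneq V(G)$. (2) If $v\in L\setminus T_0$, then $T_v=\emptyset$. (3) If $v\in T_0$ (and $v\in L$), then either $T_v=\emptyset$ or $T_v\in\mathscr{C}(H_v)$. (4) If $v\in L\cap T_0$ and $N_G(v)\subseteq T_0$, then $T_v\neq\emptyset$. (5) With $N:=\{v\in L : T_v\neq\emptyset\}$, $$\omega\big((G\circ_L H)\setminus T\big)=\omega(G\setminus T_0)+\sum_{v\in N}\omega(H_v\setminus T_v)+|T_0\cap L|-|N|.$$ (6) Every simplicial vertex of $G$ lying in $T_0$ belongs to $L$. (7) If $T_0\cap L=\emptyset$, then $T=T_0\in\mathscr{C}(G)$ and $T_0$ contains no simplicial vertex of $G$.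
   Context: All graphs are finite and simple. For a graph $\Gamma$ and $A\subseteq V(\Gamma)$, $\Gamma\setminus A$ is the induced subgraph on $V(\Gamma)\setminus A$ and $\omega(\Gamma\setminus A)$ is its number of connected components. A subset $T\subseteq V(\Gamma)$ is a cutset if $T=\emptyset$ or, for every $v\in T$, $\omega(\Gamma\setminus (T\setminus\{v\}))<\omega(\Gamma\setminus T)$; $\mathscr{C}(\Gamma)$ is the set of cutsets. $N_G(v)$ is the set of neighbours of $v$ in $G$. A vertex is simplicial if it belongs to exactly one maximal clique. For a non-empty $L\subseteq V(G)$, $G\circ_L H$ is the graph obtained from $G$ by taking, for each $v\in L$, a disjoint copy $H_v$ of $H$ and joining $v$ to every vertex of $H_v$. *)

From mathcomp Require Import all_boot.
Set Implicit Arguments. Unset Strict Implicit. Unset Printing Implicit Defensive.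

Definition simple_graph (T : finType) (e : rel T) : Prop :=
  symmetric e /\ irreflexive e.

Definition connected_graph (T : finType) (e : rel T) : Prop :=
  0 < #|T| /\ forall x y : T, connect e x y.

Definition restr (T : finType) (e : rel T) (S : {set T}) : rel T :=
  [rel x y | [&& x \in S, y \in S & e x y]].

Definition ncomp (T : finType) (e : rel T) (S : {set T}) : nat :=
  #|[set [set y in S | connect (restr e S) x y] | x in S]|.

Definition cutset (T : finType) (e : rel T) (V A : {set T}) : Prop :=
  A \subset V /\
  (A = set0 \/ forall v, v \in A -> ncomp e (V :\: (A :\ v)) < ncomp e (V :\: A)).

Definition clique (T : finType) (e : rel T) (K : {set T}) : bool :=
  [forall x in K, forall y in K, (x != y) ==> e x y].

Definition maximal_clique (T : finType) (e : rel T) (K : {set T}) : bool :=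
  clique e K && [forall K' : {set T}, (clique e K' && (K \subset K')) ==> (K' == K)].

Definition simplicial (T : finType) (e : rel T) (v : T) : Prop :=
  #|[set K : {set T} | maximal_clique e K & v \in K]| = 1.

Definition nbhd (T : finType) (e : rel T) (v : T) : {set T} := [set u | e v u].

(* The graph G o_L H on the type TG + TG * TH: inl v is the vertex v of G,
   inr (v, h) is the copy of h in H_v (only present when v \in L). *)
Definition corona_vset (TG TH : finType) (L : {set TG}) : {set TG + TG * TH} :=
  [set x | match x with inl _ => true | inr (v, _) => v \in L end].

Definition corona_rel (TG TH : finType) (eG : rel TG) (eH : rel TH) (L : {set TG})
  : rel (TG + TG * TH) :=
  fun x y =>
    match x, y with
    | inl u, inl w => eG u w
    | inl u, inr (v, _) => (u == v) && (v \in L)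
    | inr (v, _), inl u => (u == v) && (v \in L)
    | inr (v, h), inr (v', h') => [&& v == v', v \in L & eH h h']
    end.

Definition part0 (TG TH : finType) (T : {set TG + TG * TH}) : {set TG} :=
  [set v | inl v \in T].

Definition partv (TG TH : finType) (T : {set TG + TG * TH}) (v : TG) : {set TH} :=
  [set h | inr (v, h) \in T].

From mathcomp Require Import all_boot zify.
Set Implicit Arguments. Unset Strict Implicit. Unset Printing Implicit Defensive.

(* Deleting S from G o_L H leaves the components of G - S0, with the surviving
   copies H_v (v in L, v not in S0) hanging from them, together with the
   components of H_v - S_v for every v in L :&: S0, which are cut off from G.
   So omega((G o_L H) - S) is the weight
     omega(G - S0) + sum_(v in L :&: S0) omega(H_v - S_v)
   of S, and T is a cutset iff putting back any single vertex of
   T strictly lowers the weight.  Each item follows by comparing the weights of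
   T and T minus one vertex: putting back a vertex of H_v with v in T0 can only
   change the v-term, putting back one with v not in T0 changes nothing, putting
   back a vertex of G isolated from G - T0 raises omega(G - T0) by one, and
   putting back a vertex whose neighbourhood is a clique (for instance a
   simplicial vertex) does not lower it. *)

Section ConnectHomo.
Variables (T T' : finType) (e : rel T) (e' : rel T').

Lemma connect_homo_in (P : pred T) (f : T -> T') x y :
  (forall a b, P a -> e a b -> P b /\ connect e' (f a) (f b)) ->
  P x -> connect e x y -> P y /\ connect e' (f x) (f y).
Proof.
move=> fe + /connectP [p + ->].
elim: p x => [|z p IHp] x Px /=; first by split; last exact: connect0.
case/andP => /(fe _ _ Px) [Pz cxz] /(IHp z Pz) [Py czy].
by split; last exact: connect_trans czy.
Qed.

Lemma connect_homo (f : T -> T') x y :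
  (forall a b, e a b -> connect e' (f a) (f b)) ->
  connect e x y -> connect e' (f x) (f y).
Proof.
move=> fe; have fe' a b : predT a -> e a b -> predT b /\ connect e' (f a) (f b).
  by move=> _ /fe.
by case/(connect_homo_in fe' isT).
Qed.

End ConnectHomo.

Lemma card_imset_eq_kernel (T K1 K2 : finType) (f : T -> K1) (g : T -> K2)
    (S : {set T}) :
  {in S &, forall x y, (f x == f y) = (g x == g y)} -> #|f @: S| = #|g @: S|.
Proof.
move=> fg; have [-> | [x0 x0S]] := set_0Vmem S; first by rewrite !imset0 !cards0.
pose s k := odflt x0 [pick x in S | f x == k].
have sP x : x \in S -> s (f x) \in S /\ f (s (f x)) = f x.
  rewrite /s => xS; case: pickP => [y /andP [yS /eqP ->] // | /(_ x)].
  by rewrite xS eqxx.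
have g_s x : x \in S -> g (s (f x)) = g x.
  by move=> xS; have [sS /eqP] := sP x xS; rewrite fg // => /eqP.
have -> : g @: S = (g \o s) @: (f @: S).
  by rewrite -imset_comp; apply: eq_in_imset => x xS /=; rewrite g_s.
apply/esym/card_in_imset => _ _ /imsetP [x xS ->] /imsetP [y yS ->] /=.
by rewrite !g_s // => /eqP; rewrite -fg // => /eqP.
Qed.

Lemma card_bigcup_pairs (I J : finType) (D : {set I}) (X : I -> {set J}) :
  #|\bigcup_(i in D) [set (i, j) | j in X i]| = \sum_(i in D) #|X i|.
Proof.
pose F i := if i \in D then [set (i, j) | j in X i] else set0.
have -> : \bigcup_(i in D) [set (i, j) | j in X i] = \bigcup_i F i.
  by rewrite big_mkcond.
rewrite -sum1_card partition_disjoint_bigcup => [|i k ik]; last first.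
  rewrite /F; case: ifP => _; last by rewrite -setI_eq0 set0I.
  case: ifP => _; last by rewrite -setI_eq0 setI0.
  rewrite -setI_eq0; apply/eqP/setP => z; rewrite inE in_set0.
  apply/negbTE/negP => /andP [/imsetP [j _ ->] /imsetP [j' _ [eik _]]].
  by move: ik; rewrite eik eqxx.
rewrite [RHS]big_mkcond; apply: eq_bigr => i _; rewrite sum1_card /F.
by case: ifP => _; rewrite ?cards0 // card_imset // => j j' [].
Qed.

Lemma setI_inl_inr (T1 T2 : finType) (X : {set T1}) (Y : {set T2}) :
  inl @: X :&: inr @: Y = set0 :> {set T1 + T2}.
Proof.
apply/setP => k; rewrite inE in_set0; apply/negbTE/negP.
by case/andP => /imsetP [? _ ->] /imsetP [].
Qed.

Section Components.
Variables (T : finType) (e : rel T).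
Implicit Types (A S : {set T}).

Definition component S x : {set T} := [set y in S | connect (restr e S) x y].

Lemma ncompE S : ncomp e S = #|component S @: S|.
Proof. by []. Qed.

Lemma connect_restrS A S x y :
  A \subset S -> connect (restr e A) x y -> connect (restr e S) x y.
Proof.
move=> AS; apply: connect_sub => a b /and3P [aA bA eab].
by apply: connect1; rewrite /restr /= (subsetP AS _ aA) (subsetP AS _ bA).
Qed.

Hypothesis e_sym : symmetric e.

Lemma restr_sym S : symmetric (restr e S).
Proof. by move=> x y; rewrite /restr /= e_sym andbCA. Qed.

Lemma eq_component S x y : x \in S -> y \in S ->
  (component S x == component S y) = connect (restr e S) x y.
Proof.
move=> xS yS; have c_sym := sym_connect_sym (restr_sym S).
apply/eqP/idP => [Exy | cxy].
  have : y \in component S y by rewrite inE yS connect0.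
  by rewrite -Exy inE => /andP [].
apply/setP => z; rewrite !inE; case: (z \in S) => //=.
by apply/idP/idP; apply: connect_trans; rewrite // c_sym.
Qed.

Lemma ncomp_label (K : finType) (f : T -> K) S :
  {in S &, forall x y, (f x == f y) = connect (restr e S) x y} ->
  ncomp e S = #|f @: S|.
Proof.
by move=> fS; apply: card_imset_eq_kernel => x y xS yS; rewrite eq_component ?fS.
Qed.

Lemma ncomp_connected : connected_graph e -> ncomp e setT = 1.
Proof.
case=> /card_gt0P [x0 _] e_conn; apply/eqP/cards1P; exists (component setT x0).
apply/setP => C; rewrite inE; apply/imsetP/eqP => [[x _ ->] | ->]; last by exists x0.
have restrT : restr e setT =2 e by move=> a b; rewrite /restr /= !inE.
by apply/eqP; rewrite eq_component ?inE // (eq_connect restrT).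
Qed.

Section AddVertex.
Variables (A : {set T}) (u : T).
Hypothesis uA : u \notin A.
Hypothesis nbhd_clique : {in A &, forall a b, e u a -> e u b -> (a == b) || e a b}.

Lemma connect_setU1_clique :
  {in A &, forall x y, connect (restr e (u |: A)) x y = connect (restr e A) x y}.
Proof.
move=> x y xA yA; apply/idP/idP; last by apply: connect_restrS; exact: subsetUr.
(* Contract u onto a fixed neighbour w in A: since the neighbours of u form a
   clique, every edge at u becomes an edge at w or a loop. *)
pose f z := if z == u then odflt x [pick w in A | e u w] else z.
have neq_u a : a \in A -> (a == u) = false.
  by move=> aA; apply: contraNF uA => /eqP <-.
suff f_edge a b : restr e (u |: A) a b -> connect (restr e A) (f a) (f b).
  by move=> /(connect_homo f_edge); rewrite /f !neq_u.
rewrite /restr /f /= !inE => /and3P [/predU1P [-> | aA] /predU1P [-> | bA] eab].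
- by rewrite eqxx connect0.
- rewrite eqxx neq_u //.
  case: pickP => [w /andP [wA euw] | /(_ b)]; last by rewrite bA eab.
  have /predU1P [-> | ewb] := nbhd_clique wA bA euw eab; first exact: connect0.
  by apply: connect1; rewrite /= wA bA.
- rewrite e_sym in eab; rewrite eqxx neq_u //.
  case: pickP => [w /andP [wA euw] | /(_ a)]; last by rewrite aA eab.
  have /predU1P [-> | eaw] := nbhd_clique aA wA eab euw; first exact: connect0.
  by apply: connect1; rewrite /= wA aA.
by rewrite !neq_u //; apply: connect1; rewrite /= aA bA.
Qed.

Lemma card_components_setU1 : #|component (u |: A) @: A| = ncomp e A.
Proof.
rewrite ncompE; apply: card_imset_eq_kernel => x y xA yA.
by rewrite !eq_component ?connect_setU1_clique // !inE ?xA ?yA orbT.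
Qed.

Lemma ncomp_setU1_clique : ncomp e A <= ncomp e (u |: A).
Proof.
rewrite -card_components_setU1 ncompE; apply/subset_leq_card/imsetS.
exact: subsetUr.
Qed.

End AddVertex.

Lemma ncomp_setU1_isolated A u : u \notin A -> {in A, forall a, ~~ e u a} ->
  ncomp e (u |: A) = (ncomp e A).+1.
Proof.
move=> uA u_iso.
have clq : {in A &, forall a b, e u a -> e u b -> (a == b) || e a b}.
  by move=> a b aA _; rewrite (negbTE (u_iso a aA)).
have u_alone x : x \in A -> ~~ connect (restr e (u |: A)) u x.
  have u_closed : closed (restr e (u |: A)) (pred1 u).
    apply: intro_closed; first exact/sym_connect_sym/restr_sym.
    move=> a b /and3P [_ buA eab] /= /eqP au; apply/eqP.
    case/setU1P: buA => // bA.
    by move: (u_iso b bA); rewrite -au eab.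
  move=> xA; apply: contraNN uA => /(closed_connect u_closed).
  by rewrite !inE eqxx => /esym /eqP <-.
rewrite ncompE imsetU1 cardsU1 card_components_setU1 //.
have -> : component (u |: A) u \notin component (u |: A) @: A.
  apply/imsetP => -[x xA /eqP].
  by rewrite eq_component ?(negbTE (u_alone x xA)) // !inE ?xA ?eqxx ?orbT.
by rewrite add1n.
Qed.

End Components.

Section Cliques.
Variables (T : finType) (e : rel T).
Hypothesis e_sym : symmetric e.

Lemma clique_edge u c : e u c -> clique e [set u; c].
Proof.
move=> euc; apply/forallP => x; apply/implyP => /set2P xuc.
apply/forallP => y; apply/implyP => /set2P yuc.
by case: xuc yuc => -> [] ->; rewrite ?eqxx ?euc ?implybT // e_sym euc implybT.
Qed.

Lemma maximal_clique_exists K :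
  clique e K -> exists2 K', maximal_clique e K' & K \subset K'.
Proof.
move=> cK; have [K' mK' KK'] := maxset_exists (P := clique e) cK.
exists K' => //; apply/andP; split; first exact: maxsetp mK'.
by apply/forallP => K''; apply/implyP => /andP [cK'' /(maxsetsup mK' cK'') ->].
Qed.

Lemma simplicial_nbhd_clique u : simplicial e u ->
  forall a b, e u a -> e u b -> (a == b) || e a b.
Proof.
move=> /eqP /cards1P [K0 EK0] a b eua eub.
have K0P K : (maximal_clique e K && (u \in K)) = (K == K0).
  by rewrite -in_set1 -EK0 inE.
have in_K0 c : e u c -> c \in K0.
  move=> euc; have [K mK ucK] := maximal_clique_exists (clique_edge euc).
  have /eqP <- : K == K0 by rewrite -K0P mK (subsetP ucK) ?set21.
  by rewrite (subsetP ucK) ?set22.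
have /andP [/andP [/forallP cK0 _] _] : maximal_clique e K0 && (u \in K0).
  by rewrite K0P.
have /forallP /(_ b) := implyP (cK0 a) (in_K0 a eua).
by rewrite in_K0 //= -implyNb.
Qed.

End Cliques.

Section Parts.
Variables (TG TH : finType) (S : {set TG + TG * TH}).

Lemma part0_setD1l u : part0 (S :\ inl u) = part0 S :\ u.
Proof. by apply/setP => w; rewrite !inE. Qed.

Lemma partv_setD1l u v : partv (S :\ inl u) v = partv S v.
Proof. by apply/setP => w; rewrite !inE. Qed.

Lemma part0_setD1r v h : part0 (S :\ inr (v, h)) = part0 S.
Proof. by apply/setP => w; rewrite !inE. Qed.

Lemma partv_setD1r v h w :
  partv (S :\ inr (v, h)) w = if w == v then partv S v :\ h else partv S w.
Proof.
apply/setP => h'; case: eqP => [-> | nwv]; rewrite !inE.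
  by rewrite (inj_eq inr_inj) xpair_eqE eqxx.
by case: eqP => //= -[] /nwv.
Qed.

End Parts.

Section Corona.
Variables (TG TH : finType) (eG : rel TG) (eH : rel TH) (L : {set TG}).
Hypotheses (eG_sym : symmetric eG) (eH_sym : symmetric eH).

Local Notation V := (TG + TG * TH)%type.
Local Notation ce := (corona_rel eG eH L).

Lemma corona_sym : symmetric ce.
Proof.
case=> [u | [v h]] [w | [v' h']] //=.
by rewrite eq_sym; case: eqP => //= ->; rewrite eH_sym.
Qed.

Definition corona_weight (S : {set V}) :=
  ncomp eG (~: part0 S) + \sum_(v in L :&: part0 S) ncomp eH (~: partv S v).

Lemma corona_weight_setD1l S u : corona_weight (S :\ inl u) =
  ncomp eG (u |: ~: part0 S) + \sum_(v in L :&: part0 S :\ u) ncomp eH (~: partv S v).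
Proof.
rewrite /corona_weight part0_setD1l setCD setUC setIDA; congr (_ + _).
by apply: eq_bigr => v _; rewrite partv_setD1l.
Qed.

Lemma corona_weight_setD1r S v h : v \in L :&: part0 S ->
  corona_weight (S :\ inr (v, h)) + ncomp eH (~: partv S v) =
  corona_weight S + ncomp eH (h |: ~: partv S v).
Proof.
move=> vD; rewrite /corona_weight part0_setD1r !(big_setD1 _ vD) /=.
rewrite partv_setD1r eqxx setCD setUC.
rewrite (eq_bigr (fun w => ncomp eH (~: partv S w))); first by lia.
by move=> w /setD1P [/negbTE wv _]; rewrite partv_setD1r wv.
Qed.

Lemma corona_weight_setD1r_id S v h :
  v \notin part0 S -> corona_weight (S :\ inr (v, h)) = corona_weight S.
Proof.
move=> vS; rewrite /corona_weight part0_setD1r; congr (_ + _).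
apply: eq_bigr => w /setIP [_ wS]; rewrite partv_setD1r.
by case: eqP => // wv; move: vS; rewrite -wv wS.
Qed.

Definition base (x : V) : TG := match x with inl u => u | inr (v, _) => v end.

Section Removal.
Variable S : {set V}.
Local Notation W := (corona_vset TH L :\: S).
Local Notation A := (~: part0 S).
Local Notation B v := (~: partv S v).
Local Notation R := (restr ce W).

Lemma in_Wl u : (inl u \in W) = (u \in A).
Proof. by rewrite !inE andbT. Qed.

Lemma in_Wr v h : (inr (v, h) \in W) = (v \in L) && (h \in B v).
Proof. by rewrite !inE andbC. Qed.

Lemma corona_connect_sym : connect_sym R.
Proof. exact/sym_connect_sym/restr_sym/corona_sym. Qed.

Lemma corona_edge_base x y : R x y ->
  base x = base y \/ [&& base x \in A, base y \in A & eG (base x) (base y)].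
Proof.
rewrite /restr /=; case: x y => [u | [v h]] [w | [v' h']]; rewrite ?in_Wl ?in_Wr.
  by move=> ->; right.
all: by case/and3P => _ _ /andP [/eqP -> _]; left.
Qed.

Lemma base_edge x y : R x y -> connect (restr eG A) (base x) (base y).
Proof. by case/corona_edge_base => [-> | exy]; [exact: connect0 | exact: connect1]. Qed.

Lemma connect_attached_closed x y : connect R x y -> (base x \in A) = (base y \in A).
Proof.
have base_closed x' y' : R x' y' -> (base x' \in A) = (base y' \in A).
  by case/corona_edge_base => [-> | /and3P [-> ->]].
exact: (closed_connect (a := [pred z | base z \in A]) base_closed).
Qed.

Lemma connect_liftG u w : connect (restr eG A) u w -> connect R (inl u) (inl w).
Proof.
apply: connect_homo => a b /and3P [aA bA eab].
by apply: connect1; rewrite /restr /= !in_Wl aA bA.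
Qed.

Lemma connect_liftH v h h' : v \in L ->
  connect (restr eH (B v)) h h' -> connect R (inr (v, h)) (inr (v, h')).
Proof.
move=> vL; apply: (connect_homo (f := fun k => inr (v, k))) => a b /and3P [aB bB eab].
by apply: connect1; rewrite /restr /= !in_Wr vL aB bB eqxx.
Qed.

Lemma connect_base x : x \in W -> base x \in A -> connect R x (inl (base x)).
Proof.
case: x => [u | [v h]] /=; first by rewrite connect0.
rewrite in_Wr => /andP [vL hB] vA; apply: connect1.
by rewrite /restr /= in_Wr in_Wl vL hB vA eqxx.
Qed.

Lemma connect_attached x y : x \in W -> y \in W -> base x \in A -> base y \in A ->
  connect R x y = connect (restr eG A) (base x) (base y).
Proof.
move=> xW yW xA yA; apply/idP/idP; first exact: connect_homo base_edge.
move=> /connect_liftG cxy; apply: connect_trans (connect_base xW xA) _.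
by apply: connect_trans cxy _; rewrite corona_connect_sym connect_base.
Qed.

Lemma connect_detached v h y : v \notin A -> connect R (inr (v, h)) y ->
  exists2 h', y = inr (v, h') & connect (restr eH (B v)) h h'.
Proof.
move=> vA c.
pose P (z : V) := if z is inr (v', _) then v' == v else false.
pose f (z : V) := if z is inr (_, k) then k else h.
have step a b : P a -> R a b -> P b /\ connect (restr eH (B v)) (f a) (f b).
  case: a => [// | [v1 h1]] /= /eqP ->; rewrite /restr /=.
  case: b => [w | [v' h']]; rewrite ?in_Wl ?in_Wr.
    by case/and3P => _ wA /andP [/eqP wv _]; move: vA; rewrite -wv wA.
  case/and3P => /andP [_ h1B] /andP [_ h'B] /and3P [/eqP vv' _ e1]; subst v'.
  by split; [exact: eqxx | apply: connect1; rewrite /= h1B h'B].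
have [] := @connect_homo_in _ _ _ _ P f (inr (v, h)) y step (eqxx v) c.
by case: y {c} => [// | [v' h']] /= /eqP -> ch; exists h'.
Qed.

Definition corona_label (x : V) : {set TG} + TG * {set TH} :=
  match x with
  | inl u => inl (component eG A u)
  | inr (v, h) =>
      if v \in A then inl (component eG A v) else inr (v, component eH (B v) h)
  end.

Lemma corona_label_attached x :
  base x \in A -> corona_label x = inl (component eG A (base x)).
Proof. by case: x => [u | [v h]] //= ->. Qed.

Lemma corona_label_detached x :
  x \in W -> base x \notin A -> exists C, corona_label x = inr (base x, C).
Proof.
case: x => [u | [v h]] /=; first by rewrite in_Wl => ->.
by move=> _ /negbTE ->; exists (component eH (B v) h).
Qed.

Lemma corona_label_kernel :
  {in W &, forall x y, (corona_label x == corona_label y) = connect R x y}.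
Proof.
move=> x y xW yW.
have [xA | xA] := boolP (base x \in A); have [yA | yA] := boolP (base y \in A).
- rewrite !corona_label_attached // (inj_eq inl_inj) eq_component //.
  by rewrite connect_attached.
- have [C ->] := corona_label_detached yW yA; rewrite corona_label_attached //=.
  apply/esym/negbTE/negP => /connect_attached_closed.
  by rewrite xA (negbTE yA).
- have [C ->] := corona_label_detached xW xA; rewrite corona_label_attached //=.
  apply/esym/negbTE/negP => /connect_attached_closed.
  by rewrite yA (negbTE xA).
case: x xW xA => [u | [v h]] /=; first by rewrite in_Wl => ->.
case: y yW yA => [u | [v' h']] /=; first by rewrite in_Wl => ->.
rewrite !in_Wr => /andP [v'L h'B] /negbTE v'A /andP [vL hB] /negbTE vA; rewrite vA v'A.
apply/eqP/idP => [[vv' /eqP] | /(connect_detached (negbT vA)) [h2 [vv' hh'] ch]].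
  by subst v'; rewrite eq_component // => /(connect_liftH vL).
subst v' h'; have /eqP -> // : component eH (B v) h == component eH (B v) h2.
by rewrite eq_component.
Qed.

Lemma corona_label_image : corona_label @: W =
  inl @: (component eG A @: A) :|:
  inr @: \bigcup_(v in L :&: part0 S) [set (v, C) | C in component eH (B v) @: B v].
Proof.
apply/setP => k; apply/imsetP/setUP => [[x xW ->] | ].
  have [xA | xA] := boolP (base x \in A).
    by left; rewrite corona_label_attached // !imset_f.
  case: x xW xA => [u | [v h]] /=; first by rewrite in_Wl => ->.
  rewrite in_Wr => /andP [vL hB] vA; rewrite (negbTE vA); right.
  apply/imset_f/bigcupP; exists v; first by move: vA; rewrite !inE vL negbK.
  by rewrite !imset_f.
case=> /imsetP [c + ->].
  by case/imsetP => u uA ->; exists (inl u); rewrite ?in_Wl.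
case/bigcupP => v /setIP [vL vS] /imsetP [_ /imsetP [h hB ->] ->].
by exists (inr (v, h)); rewrite /= ?in_Wr ?vL ?hB // inE vS.
Qed.

Lemma ncomp_corona : ncomp ce W = corona_weight S.
Proof.
rewrite (ncomp_label corona_sym corona_label_kernel) corona_label_image.
rewrite cardsU setI_inl_inr cards0 subn0.
by rewrite (card_imset _ inl_inj) (card_imset _ inr_inj) card_bigcup_pairs.
Qed.

End Removal.
End Corona.

Section CoronaCutset.
Variables (TG TH : finType) (eG : rel TG) (eH : rel TH) (L : {set TG}).
Hypotheses (eG_sym : symmetric eG) (eH_sym : symmetric eH).
Variable T : {set TG + TG * TH}.
Hypothesis T_neq0 : T != set0.
Hypothesis T_cut : cutset (corona_rel eG eH L) (corona_vset TH L) T.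

Local Notation T0 := (part0 T).
Local Notation Tv := (partv T).
Local Notation weight := (corona_weight eG eH L).

Lemma corona_weight_cutset x : x \in T -> weight (T :\ x) < weight T.
Proof.
have [_ [T0' | cut]] := T_cut; first by move: T_neq0; rewrite T0' eqxx.
by move=> xT; rewrite -!ncomp_corona //; exact: cut.
Qed.

Lemma cut_inr_L v h : inr (v, h) \in T -> v \in L.
Proof. by have [/subsetP T_sub _] := T_cut; move/T_sub; rewrite inE. Qed.

Lemma cut_inr_part0 v h : inr (v, h) \in T -> v \in T0.
Proof.
move=> vhT; apply: contraTT (corona_weight_cutset vhT) => vT0.
by rewrite corona_weight_setD1r_id // ltnn.
Qed.

Lemma partv_eq0 v : v \notin T0 -> Tv v = set0.
Proof.
by move=> vT0; apply/setP => h; rewrite !inE; apply: contraNF vT0 => /cut_inr_part0.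
Qed.

Lemma part0_neq0 : T0 != set0.
Proof.
case/set0Pn: T_neq0 => -[u | [v h]] xT; apply/set0Pn; first by exists u; rewrite inE.
by exists v; exact: cut_inr_part0 xT.
Qed.

Lemma ncomp_setU1_part0_lt u : u \notin L -> u \in T0 ->
  ncomp eG (u |: ~: T0) < ncomp eG (~: T0).
Proof.
move=> uL uT0; have uT : inl u \in T by rewrite inE in uT0.
have := corona_weight_cutset uT; rewrite corona_weight_setD1l /corona_weight.
have -> : L :&: T0 :\ u = L :&: T0.
  by apply/setP => w; rewrite !inE; case: eqP => // ->; rewrite (negbTE uL).
by rewrite ltn_add2r.
Qed.

Lemma part0_neqT : L != setT -> T0 != setT.
Proof.
move=> LT; apply/eqP => T0T.
have /subsetPn [u _ uL] : ~~ ([set: TG] \subset L) by rewrite subTset.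
have u_iso : {in set0, forall a, ~~ eG u a} by move=> a; rewrite inE.
have := ncomp_setU1_part0_lt uL; rewrite T0T setCT ncomp_setU1_isolated ?inE //.
by move=> /(_ isT); rewrite ltnNge leqnSn.
Qed.

Lemma partv_cutset v : cutset eH setT (Tv v).
Proof.
split; first exact: subsetT.
right => h; rewrite inE => vhT.
have vD : v \in L :&: T0 by rewrite inE (cut_inr_part0 vhT) (cut_inr_L vhT).
rewrite !setTD setCD setUC -(ltn_add2l (weight T)).
by rewrite -(corona_weight_setD1r eG eH h vD) ltn_add2r corona_weight_cutset.
Qed.

Lemma partv_neq0 v : connected_graph eH -> v \in L -> v \in T0 ->
  nbhd eG v \subset T0 -> Tv v != set0.
Proof.
move=> H_conn vL vT0 nbT0; apply/eqP => Tv0.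
have vT : inl v \in T by rewrite inE in vT0.
have v_out : v \notin ~: T0 by rewrite inE negbK.
have v_isolated : {in ~: T0, forall a, ~~ eG v a}.
  by move=> a; rewrite inE; apply: contra => eva; apply: (subsetP nbT0); rewrite inE.
have := corona_weight_cutset vT; rewrite corona_weight_setD1l /corona_weight.
have vD : v \in L :&: T0 by rewrite inE vL.
rewrite (big_setD1 v vD) /= Tv0 setC0 (ncomp_connected eH_sym H_conn).
by rewrite ncomp_setU1_isolated // addSn add1n addnS ltnn.
Qed.

Lemma ncomp_corona_cutset : connected_graph eH ->
  ncomp (corona_rel eG eH L) (corona_vset TH L :\: T) +
  #|[set v in L | Tv v != set0]| =
  ncomp eG (~: T0) + \sum_(v in [set v in L | Tv v != set0]) ncomp eH (~: Tv v) +
  #|T0 :&: L|.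
Proof.
move=> H_conn; rewrite ncomp_corona // /corona_weight.
set N := [set v in L | _].
have ND : N \subset L :&: T0.
  apply/subsetP => v /setIdP [vL /set0Pn [h]]; rewrite inE => /cut_inr_part0 vT0.
  by rewrite inE vL vT0.
rewrite (big_setID N) /= (setIidPr ND).
rewrite [X in _ + (_ + X)](eq_bigr (fun _ => 1)); last first.
  move=> v /setDP [/setIP [vL _]]; rewrite inE vL negbK => /eqP ->.
  by rewrite setC0 ncomp_connected.
rewrite sum1_card [T0 :&: L]setIC -(cardsID N (L :&: T0)) (setIidPr ND).
lia.
Qed.

Lemma simplicial_part0_L v : simplicial eG v -> v \in T0 -> v \in L.
Proof.
move=> simp vT0; apply/contraT => vL.
have := ncomp_setU1_part0_lt vL vT0; rewrite ltnNge ncomp_setU1_clique //.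
  by rewrite inE negbK.
by move=> a b _ _; exact: simplicial_nbhd_clique.
Qed.

Section NoCopyInCut.
Hypothesis T0L : T0 :&: L = set0.

Lemma part0_notin_L u : u \in T0 -> u \notin L.
Proof. by move=> uT0; apply/negP => uL; have := in_set0 u; rewrite -T0L inE uT0 uL. Qed.

Lemma cutset_part0 : cutset eG setT T0.
Proof.
split; first exact: subsetT.
right => u uT0; rewrite !setTD setCD setUC.
exact: ncomp_setU1_part0_lt (part0_notin_L uT0) uT0.
Qed.

Lemma cut_eq_imset_inl : T = inl @: T0.
Proof.
apply/setP => -[u | [v h]]; first by rewrite mem_imset ?inE //; exact: inl_inj.
apply/idP/imsetP => [vhT | [u _ //]].
by have := part0_notin_L (cut_inr_part0 vhT); rewrite (cut_inr_L vhT).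
Qed.

Lemma part0_not_simplicial v : v \in T0 -> ~ simplicial eG v.
Proof. by move=> vT0 /simplicial_part0_L /(_ vT0); apply/negP/part0_notin_L. Qed.

End NoCopyInCut.
End CoronaCutset.

Unset Implicit Arguments. Set Strict Implicit.

Theorem proposition3p1 (TG TH : finType) (eG : rel TG) (eH : rel TH) (L : {set TG})
  (T : {set TG + TG * TH}) :
  simple_graph eG -> simple_graph eH ->
  connected_graph eG -> connected_graph eH ->
  L != set0 -> L != [set: TG] ->
  T != set0 -> cutset (corona_rel eG eH L) (corona_vset TH L) T ->
  let T0 := part0 T in
  let Tv := partv T in
  let N := [set v in L | Tv v != set0] in
  (T0 != set0 /\ T0 != [set: TG]) /\
  (forall v, v \in L -> v \notin T0 -> Tv v = set0) /\
  (forall v, v \in L -> v \in T0 -> Tv v = set0 \/ cutset eH [set: TH] (Tv v)) /\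
  (forall v, v \in L -> v \in T0 -> nbhd eG v \subset T0 -> Tv v != set0) /\
  (ncomp (corona_rel eG eH L) (corona_vset TH L :\: T) + #|N| =
        ncomp eG (~: T0) + \sum_(v in N) ncomp eH (~: Tv v) + #|T0 :&: L|) /\
      (forall v, simplicial eG v -> v \in T0 -> v \in L) /\
      (T0 :&: L = set0 ->
         [/\ T = [set inl v | v in T0], cutset eG [set: TG] T0 &
             forall v, v \in T0 -> ~ simplicial eG v]).
Proof.
move=> [eG_sym _] [eH_sym _] _ H_conn _ LT T_neq0 T_cut T0 Tv N.
rewrite {}/N {}/Tv {}/T0.
split; first split.
- exact (part0_neq0 eG_sym eH_sym T_neq0 T_cut).
- exact (part0_neqT eG_sym eH_sym T_neq0 T_cut LT).
split; first by move=> v _; exact (partv_eq0 eG_sym eH_sym T_neq0 T_cut (v := v)).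
split; first by move=> v _ _; right; exact (partv_cutset eG_sym eH_sym T_neq0 T_cut v).
split; first by move=> v; exact (partv_neq0 eG_sym eH_sym T_neq0 T_cut H_conn).
split; first exact (ncomp_corona_cutset eG_sym eH_sym T_neq0 T_cut H_conn).
split; first exact (simplicial_part0_L eG_sym eH_sym T_neq0 T_cut).
move=> T0L; split.
- exact (cut_eq_imset_inl eG_sym eH_sym T_neq0 T_cut T0L).
- exact (cutset_part0 eG_sym eH_sym T_neq0 T_cut T0L).
- exact (part0_not_simplicial eG_sym eH_sym T_neq0 T_cut T0L).
Qed.
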